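(* For every basic relation $r$ of Allen's interval algebra, $\{r\}$ supports crisp $r$-constraints.
   Context: Allen's interval algebra has domain $\mathbb{I}=\{[a,b] : a,b\in\mathbb{Q},\ a<b\}$; for $I=[a,b]$ write $I^-=a$, $I^+=b$. Basic relations: $x\,\mathsf{p}\,y$ iff $x^+<y^-$; $x\,\mathsf{m}\,y$ iff $x^+=y^-$; $x\,\mathsf{o}\,y$ iff $x^-<y^-<x^+<y^+$; $x\,\mathsf{d}\,y$ iff $y^-<x^-$ and $x^+<y^+$; $x\,\mathsf{s}\,y$ iff $x^-=y^-$ and $x^+<y^+$; $x\,\mathsf{f}\,y$ iff $x^+=y^+$ and $y^-<x^-$; $x\equiv y$ iff $x=y$; inverses $\mathsf{ri}$ with $x\,\mathsf{ri}\,y$ iff $y\,\mathsf{r}\,x$ (13 relations in total). A language $\Gamma$ supports crisp $r$-constraints if for every $k\in\mathbb{N}$ one can construct a CSP instance $\mathcal{I}_r$ over $\Gamma$ (variables and binary constraints with relations from $\Gamma$) with two distinguished variables $x,y$ such that for every set $X$ of at most $k$ constraints of $\mathcal{I}_r$, the set $\{(\varphi(x),\varphi(y)) : \varphi$ is an assignment of intervals satisfying $\mathcal{I}_r$ with the constraints of $X$ removed$\}$ equals $r$. *)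

From HB Require Import structures.
From mathcomp Require Import all_boot all_order all_algebra.
From Stdlib Require Import List.
Set Implicit Arguments. Unset Strict Implicit. Unset Printing Implicit Defensive.
Import Order.TTheory GRing.Theory Num.Theory.
Local Open Scope ring_scope.

Record interval := Itv { lo : rat; hi : rat; lo_lt_hi : lo < hi }.

Definition irel := interval -> interval -> Prop.

Inductive allen :=
| A_p | A_m | A_o | A_d | A_s | A_f | A_eq
| A_pi | A_mi | A_oi | A_di | A_si | A_fi.

Definition rel_p : irel := fun x y => hi x < lo y.
Definition rel_m : irel := fun x y => hi x = lo y.
Definition rel_o : irel := fun x y => lo x < lo y /\ lo y < hi x /\ hi x < hi y.
Definition rel_d : irel := fun x y => lo y < lo x /\ hi x < hi y.
Definition rel_s : irel := fun x y => lo x = lo y /\ hi x < hi y.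
Definition rel_f : irel := fun x y => hi x = hi y /\ lo y < lo x.
Definition rel_eq : irel := fun x y => x = y.
Definition inv (R : irel) : irel := fun x y => R y x.

Definition allen_rel (a : allen) : irel :=
  match a with
  | A_p => rel_p | A_m => rel_m | A_o => rel_o | A_d => rel_d
  | A_s => rel_s | A_f => rel_f | A_eq => rel_eq
  | A_pi => inv rel_p | A_mi => inv rel_m | A_oi => inv rel_o
  | A_di => inv rel_d | A_si => inv rel_s | A_fi => inv rel_f
  end.

Definition constraint := (irel * nat * nat)%type.

(* A CSP instance is a finite set (list) of constraints; its variables are those
   occurring in it. A language is a set of binary relations. *)
Definition instance_over (Gamma : irel -> Prop) (I : list constraint) : Prop :=
  forall c, In c I -> Gamma c.1.1.

(* [phi] satisfies the instance [I] with the constraints of [X] removed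
   (set semantics: every constraint of I not belonging to X holds). *)
Definition sat_without (I X : list constraint) (phi : nat -> interval) : Prop :=
  forall R u v, In (R, u, v) I -> ~ In (R, u, v) X -> R (phi u) (phi v).

Definition supports_crisp (Gamma : irel -> Prop) (r : irel) : Prop :=
  forall k : nat, exists (I : list constraint) (x y : nat),
    instance_over Gamma I /\
    forall X : list constraint, incl X I -> (length X <= k)%coq_nat ->
      forall a b : interval,
        (exists phi : nat -> interval, sat_without I X phi /\ phi x = a /\ phi y = b)
        <-> r a b.

(* A basic relation r is pp-definable from itself with auxiliary variables
   (e.g. x p y iff x p c p y for a fresh c, by transitivity and density of the
   rationals).  Taking k+1 copies of such a definition that share only x and y
   and use pairwise disjoint auxiliary variables, any k removed constraints miss
   at least one copy, which still forces r on (x, y); conversely every pair in r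
   extends to a model of all copies at once.  For inverse relations, read the
   same definition backwards. *)
From Pilot Require Import Defs.
From mathcomp Require Import all_boot all_order all_algebra.
From Stdlib Require Import List.
From mathcomp Require Import zify lra.

Definition sat_pairs (R : irel) (G : list (nat * nat)) (phi : nat -> Defs.interval) : Prop :=
  forall u v, In (u, v) G -> R (phi u) (phi v).

Definition pp_defines (R r : irel) (G : list (nat * nat)) (x y : nat) : Prop :=
  forall a b, r a b <-> exists phi, phi x = a /\ phi y = b /\ sat_pairs R G phi.

Lemma pp_defines_inv {R r : irel} {G : list (nat * nat)} {x y : nat} :
  pp_defines R r G x y -> pp_defines (Defs.inv R) (Defs.inv r) (List.map swap_pair G) y x.
Proof.
move=> Gdef a b; apply: iff_trans (Gdef b a) _.
have swapE phi : sat_pairs (Defs.inv R) (List.map swap_pair G) phi <-> sat_pairs R G phi.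
  split=> HG u v Huv.
    by apply: (HG v u); apply/in_map_iff; exists (u, v).
  by case/in_map_iff: Huv => -[u' v'] [[<- <-] /HG].
by split=> -[phi [Hx [Hy /swapE HG]]]; exists phi.
Qed.

Lemma exists_index_notin (s : list nat) (k : nat) :
  (length s <= k)%coq_nat -> exists2 i, i < k.+1 & ~ In i s.
Proof.
move=> Hs.
case: (Forall_Exists_dec (fun i => In i s) (fun i => in_dec (@eq_comparable nat) i s)
         (List.seq 0 k.+1)).
  move/incl_Forall_in_iff/(NoDup_incl_length (seq_NoDup _ _)).
  rewrite length_seq; lia.
by case/Exists_exists=> i [/in_seq Hi Hni]; exists i => //; lia.
Qed.

Definition aux_bounded (n : nat) (G : list (nat * nat)) : bool :=
  forallb (fun p => 2 <= maxn p.1 p.2 < n.+2) G.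

Section Replication.

Variables (R r : irel) (G : list (nat * nat)) (n x y : nat).

(* Variables 0 and 1 are shared by all copies; the auxiliary variables of
   copy [i] are [2 + i * n, ..., 1 + (i + 1) * n]. *)
Definition shift (i v : nat) : nat := if v < 2 then v else v + i * n.
Definition fold_var (v : nat) : nat := if v < 2 then v else 2 + (v - 2) %% n.
Definition copy_index (u v : nat) : nat := (maxn u v - 2) %/ n.

Definition replicate (k : nat) : list constraint :=
  flat_map (fun i => List.map (fun p => (R, shift i p.1, shift i p.2)) G)
    (List.seq 0 k.+1).

Hypothesis G_aux : aux_bounded n G.
Hypotheses (x_lt2 : x < 2) (y_lt2 : y < 2).
Hypothesis G_defines : pp_defines R r G x y.

Lemma shift_small i {v} : v < 2 -> shift i v = v.
Proof. by rewrite /shift => ->. Qed.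

Lemma fold_var_small v : v < 2 -> fold_var v = v.
Proof. by rewrite /fold_var => ->. Qed.

Lemma fold_shift i v : v < n.+2 -> fold_var (shift i v) = v.
Proof.
move=> v_lt; rewrite /fold_var /shift.
case: (ltnP v 2) => [v_lt2 | v_ge2]; first by rewrite v_lt2.
rewrite ltnNge (leq_trans v_ge2 (leq_addr _ _)) /=.
by rewrite -addnBAC // [_ + i * n]addnC modnMDl modn_small; lia.
Qed.

Lemma copy_index_shift i u v :
  2 <= maxn u v < n.+2 -> copy_index (shift i u) (shift i v) = i.
Proof.
move=> /andP[m_ge2 m_lt]; have n_gt0 : 0 < n by lia.
rewrite /copy_index.
have -> : maxn (shift i u) (shift i v) - 2 = i * n + (maxn u v - 2).
  by rewrite /shift; do 2!case: ifP; lia.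
by rewrite divnMDl // divn_small ?addn0; lia.
Qed.

Lemma In_replicate k c :
  In c (replicate k) <->
  exists i u v, i < k.+1 /\ In (u, v) G /\ c = (R, shift i u, shift i v).
Proof.
rewrite in_flat_map; split.
  case=> i [/in_seq Hi /in_map_iff [[u v] [<- Huv]]].
  by exists i, u, v; split => //; lia.
case=> i [u [v [Hi [Huv ->]]]]; exists i; split; first by apply/in_seq; lia.
by apply/in_map_iff; exists (u, v).
Qed.

Lemma aux_bounded_In {u v} : In (u, v) G -> 2 <= maxn u v < n.+2.
Proof. exact: (proj1 (forallb_forall _ G) G_aux). Qed.

Lemma replicate_crisp : supports_crisp (fun R' => R' = R) r.
Proof.
move=> k; exists (replicate k), x, y; split.
  by move=> c /In_replicate [i [u [v [_ [_ ->]]]]].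
move=> X _ HX a b; split.
- case=> phi [Hsat [<- <-]].
  have [i Hi HiX] : exists2 i, i < k.+1 & ~ In i (List.map (fun c => copy_index c.1.2 c.2) X).
    by apply: exists_index_notin; rewrite length_map.
  rewrite -(shift_small i x_lt2) -(shift_small i y_lt2) G_defines.
  exists (phi \o shift i); split => //; split => // u v Huv.
  apply: Hsat; first by apply/In_replicate; exists i, u, v.
  move=> HuvX; apply: HiX; apply/in_map_iff.
  by exists (R, shift i u, shift i v); rewrite /= copy_index_shift ?aux_bounded_In.
- case/G_defines=> phi [<- [<- Hsat]].
  exists (phi \o fold_var); rewrite /= !fold_var_small //; split=> //.
  move=> R' u' v' /In_replicate [i [u [v [_ [Huv [-> -> ->]]]]]] _.
  have /andP[_] := aux_bounded_In Huv; rewrite gtn_max => /andP[u_lt v_lt].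
  by rewrite /= !fold_shift //; apply: Hsat.
Qed.

End Replication.

Arguments aux_bounded_In {G n} G_aux {u v}.
Arguments replicate_crisp {R r G n x y}.

Lemma basic_and_inverse_crisp {R : irel} {G : list (nat * nat)} (n : nat) :
  pp_defines R R G 0 1 -> aux_bounded n G ->
  supports_crisp (fun R' => R' = R) R /\ supports_crisp (fun R' => R' = Defs.inv R) (Defs.inv R).
Proof.
move=> G_defines G_aux; split; first exact: replicate_crisp G_aux _ _ G_defines.
have swap_aux : aux_bounded n (List.map swap_pair G).
  apply/forallb_forall => _ /in_map_iff [[u v] [<- Huv]].
  by rewrite /= maxnC (aux_bounded_In G_aux Huv).
exact: replicate_crisp swap_aux _ _ (pp_defines_inv G_defines).
Qed.

Definition chain_gadget : list (nat * nat) := [:: (0, 2); (2, 1)].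
Definition meets_gadget : list (nat * nat) := [:: (0, 3); (2, 3); (2, 1)].
Definition overlaps_gadget : list (nat * nat) := [:: (0, 2); (2, 1); (0, 3); (1, 3)].

Lemma pp_defines_chain (R : irel) :
  (forall a b c, R a b -> R b c -> R a c) ->
  (forall a b, R a b -> exists c, R a c /\ R c b) ->
  pp_defines R R chain_gadget 0%N 1%N.
Proof.
move=> R_trans R_dense a b; split.
  case/R_dense=> c [Rac Rcb]; exists (seq.nth a [:: a; b; c]); do 2!split=> //.
  by move=> u v /= [[<- <-] | [[<- <-] | []]].
case=> phi [<- [<- Hsat]].
by apply: (R_trans _ (phi 2)); apply: Hsat; [left | right; left].
Qed.

Local Open Scope ring_scope.

Lemma pp_defines_p : pp_defines rel_p rel_p chain_gadget 0%N 1%N.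
Proof.
apply: pp_defines_chain; rewrite /rel_p.
  by move=> a b c ab bc; have := lo_lt_hi b; lra.
move=> a b ab.
have Hc : hi a + (lo b - hi a) / 3 < lo b - (lo b - hi a) / 3 by lra.
by exists (Itv Hc); rewrite /=; split; lra.
Qed.

Lemma pp_defines_eq : pp_defines rel_eq rel_eq chain_gadget 0%N 1%N.
Proof.
apply: pp_defines_chain; rewrite /rel_eq; first by move=> a b c -> ->.
by move=> a b ->; exists b.
Qed.

Lemma pp_defines_d : pp_defines rel_d rel_d chain_gadget 0%N 1%N.
Proof.
apply: pp_defines_chain; rewrite /rel_d.
  by move=> a b c [? ?] [? ?]; split; lra.
move=> a b [ab1 ab2]; have := lo_lt_hi a => ha.
have Hc : (lo a + lo b) / 2 < (hi a + hi b) / 2 by lra.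
by exists (Itv Hc); rewrite /=; do !split; lra.
Qed.

Lemma pp_defines_s : pp_defines rel_s rel_s chain_gadget 0%N 1%N.
Proof.
apply: pp_defines_chain; rewrite /rel_s.
  by move=> a b c [? ?] [? ?]; split; lra.
move=> a b [ab1 ab2]; have := lo_lt_hi a => ha.
have Hc : lo a < (hi a + hi b) / 2 by lra.
by exists (Itv Hc); rewrite /=; do !split; lra.
Qed.

Lemma pp_defines_f : pp_defines rel_f rel_f chain_gadget 0%N 1%N.
Proof.
apply: pp_defines_chain; rewrite /rel_f.
  by move=> a b c [? ?] [? ?]; split; lra.
move=> a b [ab1 ab2]; have := lo_lt_hi a => ha.
have Hc : (lo a + lo b) / 2 < hi a by lra.
by exists (Itv Hc); rewrite /=; do !split; lra.
Qed.

Lemma pp_defines_m : pp_defines rel_m rel_m meets_gadget 0%N 1%N.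
Proof.
move=> a b; rewrite /rel_m; split=> [ab | [phi [<- [<- Hsat]]]].
- have Hc : hi a - 1 < hi a by lra.
  have Hd : hi a < hi a + 1 by lra.
  exists (seq.nth a [:: a; b; Itv Hc; Itv Hd]); do 2!split=> //.
  by move=> u v /= [[<- <-] | [[<- <-] | [[<- <-] | []]]].
- have := Hsat 0%N 3%N; have := Hsat 2%N 3%N; have := Hsat 2%N 1%N.
  by rewrite /=; intuition lra.
Qed.

Lemma pp_defines_o : pp_defines rel_o rel_o overlaps_gadget 0%N 1%N.
Proof.
move=> a b; rewrite /rel_o; split=> [[ab1 [ab2 ab3]] | [phi [<- [<- Hsat]]]].
- have := lo_lt_hi a; have := lo_lt_hi b => ha hb.
  have Hc : (lo a + lo b) / 2 < (hi a + hi b) / 2 by lra.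
  have Hd : (lo b + hi a) / 2 < hi b + 1 by lra.
  exists (seq.nth a [:: a; b; Itv Hc; Itv Hd]); do 2!split=> //.
  by move=> u v /= [[<- <-] | [[<- <-] | [[<- <-] | [[<- <-] | []]]]];
    rewrite /=; do !split; lra.
- have := Hsat 0%N 2%N; have := Hsat 2%N 1%N.
  have := Hsat 0%N 3%N; have := Hsat 1%N 3%N.
  by rewrite /=; intuition lra.
Qed.

Theorem mainTheorem8 :
  forall a : allen, supports_crisp (fun R => R = allen_rel a) (allen_rel a).
Proof.
have [p pi] := basic_and_inverse_crisp 1 pp_defines_p isT.
have [m mi] := basic_and_inverse_crisp 2 pp_defines_m isT.
have [o oi] := basic_and_inverse_crisp 2 pp_defines_o isT.
have [d di] := basic_and_inverse_crisp 1 pp_defines_d isT.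
have [s si] := basic_and_inverse_crisp 1 pp_defines_s isT.
have [f fi] := basic_and_inverse_crisp 1 pp_defines_f isT.
have [e _] := basic_and_inverse_crisp 1 pp_defines_eq isT.
by case; [exact: p | exact: m | exact: o | exact: d | exact: s | exact: f | exact: e
        | exact: pi | exact: mi | exact: oi | exact: di | exact: si | exact: fi].
Qed.
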